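(* Consider the following kinetic transport model. Let $\{Z_k\}_{k\ge1}$ be a Markov chain on the two states $\{\mathrm{F},\mathrm{A}\}$ with initial distribution $\lambda=(\lambda_{\mathrm F},\lambda_{\mathrm A})$ and transition matrix $$\begin{pmatrix}1-a & a\\ b & 1-b\end{pmatrix}$$ (rows and columns indexed by $\mathrm F,\mathrm A$), $a,b\in[0,1]$. Let $K_n=\sum_{k=1}^n \mathbf 1_{\{Z_k=\mathrm F\}}$ and $f_n(k)=P(K_n=k)$. Independently of $\{Z_k\}$, let $(X_k,Y_k)_{k\ge1}$ be i.i.d. with $$P((X_k,Y_k)=(1,j))=\alpha,\qquad P((X_k,Y_k)=(-1,j))=\beta\qquad (j=\pm1),$$ where $\alpha,\beta\ge0$, $\alpha+\beta=1/2$. Let $\tilde S(n)=(\tilde S_X(n),\tilde S_Y(n))=\sum_{k=1}^{K_n}(X_k+1,Y_k)$. Then for $n\ge1$, $0\le x\le n$ and $-n\le y\le n$, $$P(\tilde S(n)=(2x,y))=\sum_{k=x}^n f_n(k)\binom{k}{x}\binom{k}{\frac{k+y}{2}}\alpha^x\beta^{k-x},$$ and (whenever $P(\tilde S_X(n)=2x)>0$) $$\operatorname{Var}(\tilde S_Y(n)\mid \tilde S_X(n)=2x)=\frac{\sum_{k=x}^n k\,f_n(k)\binom{k}{x}(2\alpha)^x(2\beta)^{k-x}}{\sum_{k=x}^n f_n(k)\binom{k}{x}(2\alpha)^x(2\beta)^{k-x}}.$$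
   Context: The binomial coefficient $\binom{k}{m}$ is taken to be $0$ when $m$ is not an integer in $\{0,\dots,k\}$ (so only $k\equiv y \pmod 2$ contribute in the first formula). *)

From HB Require Import structures.
From mathcomp Require Import all_boot all_order all_algebra.
Set Implicit Arguments. Unset Strict Implicit. Unset Printing Implicit Defensive.
Import Order.TTheory GRing.Theory Num.Theory.
Local Open Scope ring_scope.

(* sample space of the first n steps: the chain Z_1..Z_n and n i.i.d. steps
   (X_1,Y_1)..(X_n,Y_n); only the first K_n <= n steps are used *)
Definition Omega (n : nat) : finType :=
  (n.-tuple bool * n.-tuple (bool * bool))%type.

Definition sgn1 (b : bool) : int := if b then 1 else -1.

Definition Kn (n : nat) (w : Omega n) : nat := count id w.1.

Definition SX (n : nat) (w : Omega n) : int :=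
  \sum_(i < n | (i < Kn w)%N) (sgn1 (tnth w.2 i).1 + 1).
Definition SY (n : nat) (w : Omega n) : int :=
  \sum_(i < n | (i < Kn w)%N) sgn1 (tnth w.2 i).2.

(* binomial coefficient C(k, (k+y)/2), taken to be 0 unless (k+y)/2 is an
   integer in {0..k} *)
Definition binhalf (k : nat) (y : int) : nat :=
  match (k%:Z + y)%R with
  | Posz m => if odd m then 0%N else 'C(k, m./2)
  | Negz _ => 0%N
  end.

Section Model.
Variable R : realFieldType.
Variables (lamF lamA a b al be : R).

(* state encoding: true = F, false = A *)
Definition init_prob (s : bool) : R := if s then lamF else lamA.

Definition trans_prob (s t : bool) : R :=
  match s, t with
  | true, true => 1 - a
  | true, false => a
  | false, true => b
  | false, false => 1 - b
  end.

(* P(Z_1 = z_1, ..., Z_n = z_n) for n >= 1 (z_{i+1} is stored at index i) *)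
Definition chain_prob (n : nat) (z : n.-tuple bool) : R :=
  init_prob (nth true z 0) *
  \prod_(0 <= i < n.-1) trans_prob (nth true z i) (nth true z i.+1).

(* a step (X,Y) is encoded as (X == 1, Y == 1) *)
Definition step_prob (s : bool * bool) : R := if s.1 then al else be.

Definition weight (n : nat) (w : Omega n) : R :=
  chain_prob w.1 * \prod_(i < n) step_prob (tnth w.2 i).

Definition Prob (n : nat) (E : pred (Omega n)) : R :=
  \sum_(w : Omega n | E w) weight w.

Definition condE (n : nat) (g : Omega n -> R) (B : pred (Omega n)) : R :=
  (\sum_(w : Omega n | B w) weight w * g w) / Prob B.

Definition condVar (n : nat) (g : Omega n -> R) (B : pred (Omega n)) : R :=
  condE (fun w => g w ^+ 2) B - (condE g B) ^+ 2.

End Model.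

Definition fn (R : realFieldType) (lamF lamA a b al be : R) (n k : nat) : R :=
  Prob lamF lamA a b al be [pred w : Omega n | Kn w == k].

From HB Require Import structures.
From mathcomp Require Import all_boot all_order all_algebra.
From mathcomp Require Import zify ring lra.
Set Implicit Arguments. Unset Strict Implicit. Unset Printing Implicit Defensive.
Import Order.TTheory GRing.Theory Num.Theory.
Local Open Scope ring_scope.

(* Since al + be = 1/2, the law of a step (X, Y) is the product of the Bernoulli law
   (2 al, 2 be) for X and the uniform law on {1, -1} for Y.  Hence, for each value k of K_n,
   the number of X = 1 among the first k steps and the sum of their Y's are independent:
   the former is binomial, the latter is a simple symmetric random walk at time k, with law
   C(k, (k + y)/2) / 2^k, mean 0 and second moment k.  Averaging over k with the weights
   f_n(k) gives both formulas, and the conditional mean of S_Y vanishes. *)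

Lemma binhalfS k y : binhalf k.+1 y = (binhalf k (y - 1) + binhalf k (y + 1))%N.
Proof.
rewrite /binhalf.
have -> : k.+1%:Z + y = (k%:Z + y) + 1 by lia.
have -> : k%:Z + (y - 1) = (k%:Z + y) - 1 by lia.
have -> : k%:Z + (y + 1) = (k%:Z + y) + 1 by lia.
case: (k%:Z + y) => [[|[|p]]|[|p]] //=.
- by rewrite binS bin0 addnC.
- rewrite addn1 /= negbK binS addnC; by case: (odd p).
by rewrite !bin0.
Qed.

Section SimpleRandomWalk.
Variable R : realFieldType.

Fixpoint walkE (k : nat) (v : int -> R) : R :=
  if k is k'.+1 then (walkE k' (fun y => v (1 + y)) + walkE k' (fun y => v (-1 + y))) / 2
  else v 0.

Lemma eq_walkE k (v1 v2 : int -> R) : v1 =1 v2 -> walkE k v1 = walkE k v2.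
Proof. by elim: k v1 v2 => [|k IH] v1 v2 /= E; rewrite ?E // !(IH _ _ (fun y => E _)). Qed.

Lemma walkE_lin k c1 c2 (v1 v2 : int -> R) :
  walkE k (fun y => c1 * v1 y + c2 * v2 y) = c1 * walkE k v1 + c2 * walkE k v2.
Proof. by elim: k v1 v2 => [|k IH] v1 v2 //=; rewrite !IH; ring. Qed.

Lemma walkE_const k c : walkE k (fun _ => c) = c.
Proof. by elim: k c => [|k IH] c //=; rewrite IH; lra. Qed.

Lemma walkE_step k v :
  walkE k.+1 v = walkE k (fun y => (v (1 + y) + v (-1 + y)) / 2).
Proof.
rewrite (@eq_walkE k _ (fun y => 2^-1 * v (1 + y) + 2^-1 * v (-1 + y))).
  by rewrite walkE_lin /=; ring.
by move=> y; ring.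
Qed.

Lemma walkE_eq k y0 : walkE k (fun y => (y == y0)%:R) = (binhalf k y0)%:R / 2 ^+ k.
Proof.
elim: k y0 => [|k IH] y0 /=.
  by rewrite /binhalf expr0 divr1 add0r; case: y0 => [[|[|p]]|p] //=; case: odd.
have shift a : walkE k (fun y => (a + y == y0)%:R) = (binhalf k (y0 - a))%:R / 2 ^+ k.
  by rewrite -IH; apply: eq_walkE => y; congr (_%:R); apply/eqP/eqP; lia.
rewrite !shift opprK binhalfS natrD exprS invfM; ring.
Qed.

Lemma walkE_mean k : walkE k (fun y => y%:~R) = 0.
Proof.
elim: k => [|k IH] //; rewrite walkE_step -IH.
by apply: eq_walkE => y; rewrite !intrD; lra.
Qed.

Lemma walkE_sqr k : walkE k (fun y => y%:~R ^+ 2) = k%:R.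
Proof.
elim: k => [|k IH]; first by rewrite /= expr0n.
rewrite walkE_step (@eq_walkE k _ (fun y => 1 * y%:~R ^+ 2 + 1 * 1)).
  by rewrite walkE_lin walkE_const IH -[k.+1]addn1 natrD; ring.
by move=> y; rewrite !intrD; lra.
Qed.

End SimpleRandomWalk.

Section BinomialCount.
Variables (R : comPzRingType) (p q : R).

Fixpoint binomE (k : nat) (u : nat -> R) : R :=
  if k is k'.+1 then p * binomE k' (fun c => u c.+1) + q * binomE k' u else u 0%N.

Lemma eq_binomE k (u1 u2 : nat -> R) : u1 =1 u2 -> binomE k u1 = binomE k u2.
Proof. by elim: k u1 u2 => [|k IH] u1 u2 /= E; rewrite ?E // !(IH _ _ (fun c => E _)). Qed.

Lemma binomE0 k : binomE k (fun _ => 0) = 0.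
Proof. by elim: k => [|k IH] //=; rewrite IH !mulr0 addr0. Qed.

Lemma binomE_eq k x :
  binomE k (fun c => (c == x)%:R) = 'C(k, x)%:R * p ^+ x * q ^+ (k - x).
Proof.
elim: k x => [|k IH] [|x] /=; rewrite ?bin0 ?bin0n ?mul0r ?mul1r ?expr0 //.
  by rewrite (@eq_binomE k _ (fun _ => 0)) // binomE0 IH bin0 subn0 exprS; ring.
rewrite (@eq_binomE k _ (fun c => (c == x)%:R)) // !IH binS natrD subSS.
have [ltxk | lekx] := ltnP x k; first by rewrite -(subnSK ltxk) !exprS; ring.
by rewrite (bin_small (n:=k) (m:=x.+1)) ?ltnS // !exprS; ring.
Qed.

End BinomialCount.

Lemma big_tuple_cons (R : nmodType) (T : finType) n (F : n.+1.-tuple T -> R) :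
  \sum_(s : n.+1.-tuple T) F s = \sum_(t : T) \sum_(s : n.-tuple T) F [tuple of t :: s].
Proof.
rewrite pair_big /= (reindex (fun p : T * n.-tuple T => [tuple of p.1 :: p.2])) //=.
exists (fun s : n.+1.-tuple T => (thead s, [tuple of behead s])).
  by move=> [t s] _ /=; congr pair; apply: val_inj.
by move=> s _ /=; rewrite [RHS]tuple_eta.
Qed.

Lemma big_bool_pair (R : nmodType) (F : bool * bool -> R) :
  \sum_(t : bool * bool) F t =
  F (true, true) + F (true, false) + F (false, true) + F (false, false).
Proof.
have := pair_bigA +%R (fun a b => F (a, b)); rewrite !big_bool /= => E.
by rewrite -addrA E; apply: eq_bigr => -[].
Qed.

Section Steps.
Variables (R : realFieldType) (al be : R).
Hypothesis al_be : al + be = 2^-1.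

Definition countX (s : seq (bool * bool)) : nat := count (fun t => t.1) s.
Definition sumY (s : seq (bool * bool)) : int := \sum_(t <- s) sgn1 t.2.

Definition steps_weight n (s : n.-tuple (bool * bool)) : R :=
  \prod_(i < n) step_prob al be (tnth s i).

Definition prefixE n k (h : nat -> int -> R) : R :=
  \sum_(s : n.-tuple (bool * bool)) steps_weight s * h (countX (take k s)) (sumY (take k s)).

Lemma steps_weight_cons n t (s : n.-tuple (bool * bool)) :
  steps_weight [tuple of t :: s] = step_prob al be t * steps_weight s.
Proof.
rewrite /steps_weight big_ord_recl; congr (_ * _).
by apply: eq_bigr => i _; rewrite !(tnth_nth (true, true)).
Qed.

Lemma sum_steps_weight n : \sum_(s : n.-tuple (bool * bool)) steps_weight s = 1.
Proof.
elim: n => [|n IH].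
  by rewrite (eq_bigr (fun _ => 1)) ?sumr_const ?card_tuple // => s; rewrite /steps_weight big_ord0.
rewrite big_tuple_cons (eq_bigr (fun t => step_prob al be t)) => [|t _].
  rewrite big_bool_pair /step_prob /=.
  have -> : al + al + be + be = 2 * (al + be) by ring.
  by rewrite al_be mulfV ?pnatr_eq0.
by rewrite -[RHS]mulr1 -IH mulr_sumr; apply: eq_bigr => s _; rewrite steps_weight_cons.
Qed.

Lemma prefixE0 n h : prefixE n 0 h = h 0%N 0.
Proof.
rewrite /prefixE (eq_bigr (fun s => steps_weight s * h 0%N 0)) => [|s _].
  by rewrite -mulr_suml sum_steps_weight mul1r.
by rewrite take0 /sumY big_nil.
Qed.

Lemma prefixE_cons n k h :
  prefixE n.+1 k.+1 h =
  \sum_(t : bool * bool) step_prob al be t * prefixE n k (fun c y => h (t.1 + c)%N (sgn1 t.2 + y)).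
Proof.
rewrite /prefixE big_tuple_cons; apply: eq_bigr => t _; rewrite mulr_sumr.
by apply: eq_bigr => s _; rewrite steps_weight_cons /countX /sumY /= big_cons mulrA.
Qed.

Lemma prefixE_factor n k u v : (k <= n)%N ->
  prefixE n k (fun c y => u c * v y) = binomE (2 * al) (2 * be) k u * walkE k v.
Proof.
elim: k n u v => [|k IH] [|n] u v //= lekn; rewrite ?prefixE0 //.
rewrite prefixE_cons big_bool_pair /step_prob /= !IH //.
set b1 := binomE _ _ k (fun c => u (1 + c)%N); set b0 := binomE _ _ k (fun c => u (0 + c)%N).
change (binomE (2 * al) (2 * be) k (fun c => u c.+1)) with b1.
change (binomE (2 * al) (2 * be) k u) with b0.
by field.
Qed.
End Steps.

Lemma sum_ord_from (R : nmodType) x n (F : nat -> R) :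
  (forall k, (k < x)%N -> F k = 0) -> \sum_(k < n) F k = \sum_(x <= k < n) F k.
Proof.
move=> F0; rewrite big_geq_mkord [RHS]big_mkcond; apply: eq_bigr => k _.
by case: leqP => // /F0.
Qed.

Lemma sum_take n (s : n.-tuple (bool * bool)) K (f : bool * bool -> int) : (K <= n)%N ->
  \sum_(i < n | (i < K)%N) f (tnth s i) = \sum_(t <- take K s) f t.
Proof.
move=> leKn; rewrite [RHS](big_nth (true, true)) size_takel ?size_tuple //.
rewrite (big_nat_widen 0 K n) // big_mkord.
by apply: eq_big => // i ltiK; rewrite (tnth_nth (true, true)) nth_take.
Qed.

Lemma Kn_le n (w : Omega n) : (Kn w <= n)%N.
Proof. by rewrite /Kn -[X in (_ <= X)%N](size_tuple w.1) count_size. Qed.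

Lemma SXE n (w : Omega n) : SX w = 2 * (countX (take (Kn w) w.2))%:Z.
Proof.
rewrite /SX (sum_take _ (fun t => sgn1 t.1 + 1)) ?Kn_le //.
by elim: (take _ _) => [|t s IH]; rewrite ?big_nil ?big_cons ?IH /countX //=; case: t.1 => /=; lia.
Qed.

Lemma SYE n (w : Omega n) : SY w = sumY (take (Kn w) w.2).
Proof. by rewrite /SY (sum_take _ (fun t => sgn1 t.2)) ?Kn_le. Qed.

Lemma SX_eq n (w : Omega n) x : (SX w == 2 * x%:Z) = (countX (take (Kn w) w.2) == x).
Proof. by rewrite SXE; apply/eqP/eqP => [|-> //]; lia. Qed.

Section Model.
Variables (R : realFieldType) (lamF lamA a b al be : R).
Hypothesis al_be : al + be = 2^-1.

Local Notation weight := (weight lamF lamA a b al be).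
Local Notation chain_prob := (chain_prob lamF lamA a b).
Local Notation fn := (fn lamF lamA a b al be).
Local Notation prefixE := (prefixE al be).

Lemma sum_Omega n (F : Omega n -> R) :
  \sum_(w : Omega n) F w = \sum_(z : n.-tuple bool) \sum_(s : n.-tuple (bool * bool)) F (z, s).
Proof. by rewrite pair_big; apply: eq_bigr => -[]. Qed.

Lemma weightE n (w : Omega n) : weight w = chain_prob w.1 * steps_weight al be w.2.
Proof. by []. Qed.

Lemma sum_weight_prefix n (h : nat -> int -> R) :
  \sum_(w : Omega n) weight w * h (countX (take (Kn w) w.2)) (sumY (take (Kn w) w.2))
  = \sum_(z : n.-tuple bool) chain_prob z * prefixE n (count id z) h.
Proof.
rewrite sum_Omega; apply: eq_bigr => z _.
by rewrite /prefixE mulr_sumr; apply: eq_bigr => s _; rewrite weightE mulrA.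
Qed.

Lemma fnE n k : fn n k = \sum_(z : n.-tuple bool) chain_prob z * (count id z == k)%:R.
Proof.
rewrite /fn /Prob big_mkcond sum_Omega; apply: eq_bigr => z _; rewrite /Kn /=.
case: eqP => _; last by rewrite mulr0 big1.
under eq_bigr do rewrite weightE.
by rewrite /= -mulr_sumr (sum_steps_weight al_be) !mulr1.
Qed.

Lemma sum_chain_count n (phi : nat -> R) :
  \sum_(z : n.-tuple bool) chain_prob z * phi (count id z) = \sum_(k < n.+1) fn n k * phi k.
Proof.
under [RHS]eq_bigr => k _ do rewrite fnE mulr_suml.
rewrite exchange_big /=; apply: eq_bigr => z _.
have ltzn : (count id z < n.+1)%N by rewrite ltnS -[X in (_ <= X)%N](size_tuple z) count_size.
rewrite (bigD1 (Ordinal ltzn)) //= eqxx mulr1 big1 ?addr0 // => k /eqP neqk.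
rewrite (_ : (count id z == k) = false) ?mulr0 ?mul0r //.
by apply/eqP => ezk; apply: neqk; apply: val_inj.
Qed.

Lemma sum_SX_eq n x (v : int -> R) :
  \sum_(w : Omega n | SX w == 2 * x%:Z) weight w * v (SY w)
  = \sum_(x <= k < n.+1) fn n k * ('C(k, x)%:R * (2 * al) ^+ x * (2 * be) ^+ (k - x)) * walkE k v.
Proof.
pose phi k := 'C(k, x)%:R * (2 * al) ^+ x * (2 * be) ^+ (k - x) * walkE k v.
rewrite big_mkcond (eq_bigr (fun w => weight w * ((countX (take (Kn w) w.2) == x)%:R
                                              * v (sumY (take (Kn w) w.2))))) => [|w _]; last first.
  by rewrite SX_eq SYE; case: eqP; rewrite ?mul1r ?mul0r ?mulr0.
rewrite (@sum_weight_prefix n (fun c y => (c == x)%:R * v y)).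
rewrite (eq_bigr (fun z => chain_prob z * phi (count id z))) => [|z _]; last first.
  rewrite (prefixE_factor al_be) ?binomE_eq //.
  by rewrite -[X in (_ <= X)%N](size_tuple z) count_size.
rewrite sum_chain_count (@sum_ord_from _ x _ (fun k => fn n k * phi k)) => [|k ltkx].
  by apply: eq_bigr => k _; rewrite /phi !mulrA.
by rewrite /phi bin_small // !mul0r mulr0.
Qed.

Lemma Prob_SX_SY_eq n x y :
  Prob lamF lamA a b al be [pred w : Omega n | (SX w == 2 * x%:Z) && (SY w == y)]
  = \sum_(x <= k < n.+1) fn n k * 'C(k, x)%:R * (binhalf k y)%:R * al ^+ x * be ^+ (k - x).
Proof.
rewrite /Prob big_mkcondr /=.
under eq_bigr => w _ do rewrite -mulrb -mulr_natr.
rewrite (@sum_SX_eq n x (fun z => (z == y)%:R)); apply: eq_big_nat => k /andP[lexk _].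
rewrite walkE_eq.
have -> : 2 ^+ k = 2 ^+ x * 2 ^+ (k - x) :> R by rewrite -exprD subnKC.
by rewrite !exprMn; field; rewrite !expf_neq0 ?pnatr_eq0.
Qed.

Lemma Prob_SX_eq n x :
  Prob lamF lamA a b al be [pred w : Omega n | SX w == 2 * x%:Z]
  = \sum_(x <= k < n.+1) fn n k * 'C(k, x)%:R * (2 * al) ^+ x * (2 * be) ^+ (k - x).
Proof.
rewrite /Prob; under eq_bigr => w _ do rewrite -[weight w]mulr1.
by rewrite (@sum_SX_eq n x (fun _ => 1)); apply: eq_bigr => k _; rewrite walkE_const mulr1 !mulrA.
Qed.

Lemma sum_SX_eq_SY n x :
  \sum_(w : Omega n | SX w == 2 * x%:Z) weight w * (SY w)%:~R = 0.
Proof. by rewrite (@sum_SX_eq n x (fun z => z%:~R)) big1 // => k _; rewrite walkE_mean mulr0. Qed.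

Lemma sum_SX_eq_SY2 n x :
  \sum_(w : Omega n | SX w == 2 * x%:Z) weight w * (SY w)%:~R ^+ 2
  = \sum_(x <= k < n.+1) k%:R * fn n k * 'C(k, x)%:R * (2 * al) ^+ x * (2 * be) ^+ (k - x).
Proof.
rewrite (@sum_SX_eq n x (fun z => z%:~R ^+ 2)).
by apply: eq_bigr => k _; rewrite walkE_sqr; ring.
Qed.

End Model.

Theorem proposition4 (R : realFieldType) (lamF lamA a b al be : R)
    (n x : nat) (y : int) :
  0 <= lamF -> 0 <= lamA -> lamF + lamA = 1 ->
  0 <= a <= 1 -> 0 <= b <= 1 ->
  0 <= al -> 0 <= be -> al + be = 2^-1 ->
  (1 <= n)%N -> (x <= n)%N -> - (n%:Z) <= y <= n%:Z ->
  Prob lamF lamA a b al be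
      [pred w : Omega n | (SX w == 2 * x%:Z) && (SY w == y)]
    = \sum_(x <= k < n.+1)
        fn lamF lamA a b al be n k * ('C(k, x))%:R * (binhalf k y)%:R
          * al ^+ x * be ^+ (k - x)
  /\
  (0 < Prob lamF lamA a b al be [pred w : Omega n | SX w == 2 * x%:Z] ->
   condVar lamF lamA a b al be (fun w : Omega n => (SY w)%:~R)
       [pred w : Omega n | SX w == 2 * x%:Z]
     = (\sum_(x <= k < n.+1)
          k%:R * fn lamF lamA a b al be n k * ('C(k, x))%:R
            * (2 * al) ^+ x * (2 * be) ^+ (k - x))
       / (\sum_(x <= k < n.+1)
          fn lamF lamA a b al be n k * ('C(k, x))%:R
            * (2 * al) ^+ x * (2 * be) ^+ (k - x))).
Proof.
move=> _ _ _ _ _ _ _ al_be _ _ _; split; first exact: Prob_SX_SY_eq.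
move=> _; rewrite /condVar /condE /= (sum_SX_eq_SY2 lamF lamA a b al_be).
by rewrite (sum_SX_eq_SY lamF lamA a b al_be) (Prob_SX_eq lamF lamA a b al_be) mul0r expr0n subr0.
Qed.
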